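(* Let $\mathrm{OP}_n=\mathbb{C}[\partial\mathbf{x},E_1,\dots,E_{n-1}]\,\Delta(\mathbf{x})$. A polynomial $f(\mathbf{x},\mathbf{y})\in\mathbb{C}[\mathbf{x},\mathbf{y}]$ lies in $\mathrm{OP}_n^{\perp}$ if and only if $$f(\mathbf{x},\phi_\lambda(\mathbf{x}))\in(e_1(\mathbf{x}),\dots,e_n(\mathbf{x}))$$ identically in $\lambda$, i.e. in the ideal generated by $e_1(\mathbf{x}),\dots,e_n(\mathbf{x})$ in $\mathbb{C}[\mathbf{x},\lambda_1,\dots,\lambda_{n-1}]$, where $\phi_\lambda(z)=\lambda_{n-1}z^{n-1}+\cdots+\lambda_1z$ and $f(\mathbf{x},\phi_\lambda(\mathbf{x}))$ means $f$ with each $y_j$ replaced by $\phi_\lambda(x_j)$.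
   Context: $\mathbb{C}[\mathbf{x},\mathbf{y}]=\mathbb{C}[x_1,\dots,x_n,y_1,\dots,y_n]$; $E_k=\sum_{i=1}^n y_i\,\partial x_i^{\,k}$; $\Delta(\mathbf{x})=\prod_{i<j}(x_i-x_j)$; $e_i(\mathbf{x})$ is the $i$-th elementary symmetric polynomial; $\lambda_1,\dots,\lambda_{n-1}$ are indeterminates. The inner product on $\mathbb{C}[\mathbf{x},\mathbf{y}]$ is $(f,g)=\bigl(g(\partial\mathbf{x},\partial\mathbf{y})f(\mathbf{x},\mathbf{y})\bigr)|_{\mathbf{x},\mathbf{y}\mapsto 0}$, and $\perp$ denotes orthogonal complement with respect to it. *)

From HB Require Import structures.
From mathcomp Require Import all_boot all_order all_algebra.
From mathcomp Require Import mpoly.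
Set Implicit Arguments.
Unset Strict Implicit.
Unset Printing Implicit Defensive.
Import GRing.Theory Num.Theory.
Local Open Scope ring_scope.

Section OP.
Variables (C : numClosedFieldType) (n : nat).

Definition PXY := {mpoly C[n + n]}.

Definition xv (i : 'I_n) : PXY := 'X_(lshift n i).
Definition yv (i : 'I_n) : PXY := 'X_(rshift n i).

Definition dx (i : 'I_n) (p : PXY) : PXY := mderiv (lshift n i) p.

Definition Eop (k : nat) (p : PXY) : PXY :=
  \sum_(i < n) yv i * iter k (dx i) p.

Definition Delta : PXY :=
  \prod_(i < n) \prod_(j < n | (i < j)%N) (xv i - xv j).

Inductive in_OPalg : (PXY -> PXY) -> Prop :=
  | OPalg_scal (c : C) : in_OPalg (fun p => c *: p)
  | OPalg_dx (i : 'I_n) : in_OPalg (dx i)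
  | OPalg_E (k : nat) : (1 <= k)%N -> (k <= n.-1)%N -> in_OPalg (Eop k)
  | OPalg_add D1 D2 : in_OPalg D1 -> in_OPalg D2 -> in_OPalg (fun p => D1 p + D2 p)
  | OPalg_comp D1 D2 : in_OPalg D1 -> in_OPalg D2 -> in_OPalg (fun p => D1 (D2 p)).

Definition OP (g : PXY) : Prop := exists D, in_OPalg D /\ g = D Delta.

(* (f, g) = (g(dx, dy) f)(0) *)
Definition pairing (f g : PXY) : C :=
  (\sum_(m <- msupp g) g@_m *: mderivm m f).@[fun _ => 0].

Definition in_OP_perp (f : PXY) : Prop := forall g, OP g -> pairing f g = 0.

(* Target ring C[x_1..x_n, lambda_1..lambda_{n-1}] = {mpoly C[n + n.-1]}:
   x_i is  lshift n.-1 i,  lambda_{j+1} is  rshift n j  (j : 'I_n.-1). *)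
Definition PXL := {mpoly C[n + n.-1]}.

Definition xt (i : 'I_n) : PXL := 'X_(lshift n.-1 i).
Definition lam (j : 'I_n.-1) : PXL := 'X_(rshift n j).

Definition phi (z : PXL) : PXL := \sum_(j < n.-1) lam j * z ^+ j.+1.

Definition subst_var (v : 'I_(n + n)) : PXL :=
  match split v with
  | inl i => xt i
  | inr j => phi (xt j)
  end.

Definition subst_phi (f : PXY) : PXL :=
  f \mPo [tuple subst_var v | v < n + n].

Definition esym_x (k : nat) : PXL :=
  \sum_(h : {set 'I_n} | #|h| == k) \prod_(i in h) xt i.

Definition in_esym_ideal (h : PXL) : Prop :=
  exists q : 'I_n -> PXL, h = \sum_(i < n) q i * esym_x i.+1.

End OP.

From HB Require Import structures.
From mathcomp Require Import all_boot all_order all_algebra all_fingroup.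
From mathcomp Require Import mpoly ssrcomplements zify ring.
Set Implicit Arguments. Unset Strict Implicit. Unset Printing Implicit Defensive.
Import GRing.Theory Num.Theory.
Local Open Scope ring_scope.

(* Write [(f, g) = (g(d/dx, d/dy) f)(0)].  This pairing is symmetric, [d/dx_i]
   is adjoint to multiplication by [x_i], and [E_k] to
   [Eadj k = sum_i x_i^k d/dy_i]; so [f] is orthogonal to [OP_n] iff
   [(D f, Delta) = 0] for every [D] in the algebra generated by the [x_i] and
   the [Eadj k].  The substitution [y_j := phi_lambda(x_j)] turns [Eadj k]
   into [d/dlambda_k] and commutes with multiplication by [x_i].  Pairing with
   [Delta] only sees the [y]-free part [f(x, 0)], and [g(d/dx) Delta = 0] iff
   [g] lies in [(e_1, ..., e_n)]: one inclusion by antisymmetry and degree,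
   the other by induction on [n], expanding in the last variable.  Finally a
   polynomial in [x, lambda] lies in the ideal iff its [lambda]-free part and
   all its [lambda]-derivatives do, by the Euler operator in [lambda]. *)

Section MPolyDiffOp.
Variables (R : comNzRingType) (k : nat).
Implicit Types (p q h g : {mpoly R[k]}).

Lemma big_msupp_bound (V : zmodType) (F : 'X_{1..k} -> R -> V) p (K : nat) :
  (msize p <= K)%N -> (forall m, F m 0 = 0) ->
  \sum_(m <- msupp p) F m p@_m = \sum_(m : 'X_{1..k < K}) F m p@_m.
Proof.
move=> le_pK F0; set I : subFinType _ := 'X_{1..k < K}.
rewrite (big_mksub I) ?msupp_uniq //=; first last.
  by move=> x /msize_mdeg_lt /leq_trans; apply.
by rewrite big_rmcond //= => j /memN_msupp_eq0 ->; rewrite F0.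
Qed.

Lemma mpoly_linear_eq (V : lmodType R) (F G : {mpoly R[k]} -> V) :
  (forall c p q, F (c *: p + q) = c *: F p + F q) ->
  (forall c p q, G (c *: p + q) = c *: G p + G q) ->
  (forall m, F 'X_[m] = G 'X_[m]) -> forall p, F p = G p.
Proof.
move=> linF linG eqX.
have lin0 (H : {mpoly R[k]} -> V) :
    (forall c p q, H (c *: p + q) = c *: H p + H q) -> H 0 = 0.
  move=> linH; have := linH 1 0 0; rewrite scaler0 addr0 scale1r -{1}[H 0]addr0.
  by move/addrI.
elim/mpolyind => [|c m p _ _ IH]; first by rewrite lin0 // lin0.
by rewrite linF linG IH eqX.
Qed.

Lemma mpoly_ring_ind (P : {mpoly R[k]} -> Prop) :
  (forall c, P c%:MP) -> (forall i, P 'X_i) ->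
  (forall p q, P p -> P q -> P (p + q)) -> (forall p q, P p -> P q -> P (p * q)) ->
  forall p, P p.
Proof.
move=> PC PX PD PM p; rewrite [p]mpolyE.
apply: (big_ind P _ PD) => //; first by have := PC 0; rewrite mpolyC0.
move=> m _; rewrite -mul_mpolyC; apply: (PM) => //.
rewrite mpolyXE_id; apply: (big_ind P _ PM) => //; first by rewrite -mpolyC1.
move=> i _; elim: (m i) => [|e IHe]; first by rewrite expr0 -mpolyC1.
by rewrite exprS; apply: PM.
Qed.

Lemma mpoly_morph_eq (S : nzRingType) (F G : {mpoly R[k]} -> S) :
  {morph F : p q / p + q} -> {morph F : p q / p * q} ->
  {morph G : p q / p + q} -> {morph G : p q / p * q} ->
  (forall c, F c%:MP = G c%:MP) -> (forall i, F 'X_i = G 'X_i) -> F =1 G.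
Proof.
move=> FD FM GD GM eqC eqX.
by elim/mpoly_ring_ind => [c|i|p q Hp Hq|p q Hp Hq] //; rewrite ?FD ?GD ?FM ?GM Hp Hq.
Qed.

Lemma mderivXU i j : ('X_i : {mpoly R[k]})^`M(j) = ((i == j)%:R)%:MP.
Proof.
rewrite mderivX mnm1E; case: eqP => [<-|_]; last by rewrite scale0r mpolyC0.
have -> : (U_(i) - U_(i) = 0)%MM by apply/mnmP => l; rewrite mnmBE mnm0E subnn.
by rewrite mpolyX0 scale1r mpolyC1.
Qed.

Lemma mderiv_comp (l : nat) (lq : k.-tuple {mpoly R[l]}) (j : 'I_l) p :
  (p \mPo lq)^`M(j) = \sum_(i < k) (p^`M(i) \mPo lq) * (tnth lq i)^`M(j).
Proof.
elim/mpoly_ring_ind: p => [c|i|p q Hp Hq|p q Hp Hq].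
- rewrite comp_mpolyC mderivC big1 // => i _; by rewrite mderivC comp_mpoly0 mul0r.
- rewrite comp_mpolyXU (bigD1 i) //= big1 => [|i' ne].
    by rewrite mderivXU eqxx comp_mpoly1 mul1r addr0 (tnth_nth 0).
  by rewrite mderivXU eq_sym (negbTE ne) comp_mpoly0 mul0r.
- rewrite comp_mpolyD mderivD Hp Hq -big_split /=; apply: eq_bigr => i _.
  by rewrite mderivD comp_mpolyD mulrDl.
- rewrite rmorphM mderivM Hp Hq mulr_suml mulr_sumr -big_split /=.
  apply: eq_bigr => i _; rewrite mderivM comp_mpolyD !rmorphM mulrDl.
  by rewrite -!mulrA; congr (_ * _ + _); rewrite mulrC.
Qed.

Lemma msize_mderiv p i : (msize (p^`M(i)) <= (msize p).-1)%N.
Proof.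
rewrite [X in (X <= _)%N]msizeE; apply/bigmax_leqP_seq => m.
rewrite mcoeff_msupp mcoeff_mderiv => nz_m _.
have : (m + U_(i))%MM \in msupp p.
  by rewrite mcoeff_msupp; apply: contraNneq nz_m => ->; rewrite mul0rn.
by move/msize_mdeg_lt; rewrite mdegD mdeg1; lia.
Qed.

Definition mderivp h p : {mpoly R[k]} := \sum_(m <- msupp h) h@_m *: p^`M[m].

Lemma mderivpE h p (K : nat) : (msize h <= K)%N ->
  mderivp h p = \sum_(m : 'X_{1..k < K}) h@_m *: p^`M[m].
Proof.
move=> le_hK; rewrite /mderivp (big_msupp_bound (F := fun m c => c *: p^`M[m]) le_hK) //.
by move=> m; rewrite scale0r.
Qed.

Lemma mderivpDl h1 h2 p : mderivp (h1 + h2) p = mderivp h1 p + mderivp h2 p.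
Proof.
pose K := (msize h1 + msize h2 + msize (h1 + h2)).+1.
rewrite !(@mderivpE _ _ K) -?big_split /=; try by rewrite /K; lia.
by apply: eq_bigr => m _; rewrite mcoeffD scalerDl.
Qed.

Lemma mderivpZl c h p : mderivp (c *: h) p = c *: mderivp h p.
Proof.
pose K := (msize h + msize (c *: h)).+1.
rewrite !(@mderivpE _ _ K) ?scaler_sumr; try by rewrite /K; lia.
by apply: eq_bigr => m _; rewrite mcoeffZ scalerA.
Qed.

Lemma mderivp0l p : mderivp 0 p = 0.
Proof. by rewrite /mderivp msupp0 big_nil. Qed.

Lemma mderivpDr h p q : mderivp h (p + q) = mderivp h p + mderivp h q.
Proof. by rewrite /mderivp -big_split; apply: eq_bigr => m _; rewrite mderivmD scalerDr. Qed.

Lemma mderivpZr c h p : mderivp h (c *: p) = c *: mderivp h p.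
Proof.
rewrite /mderivp scaler_sumr; apply: eq_bigr => m _.
by rewrite mderivmZ !scalerA mulrC.
Qed.

Lemma mderivp0r h : mderivp h 0 = 0.
Proof. by rewrite /mderivp big1 // => m _; rewrite raddf0 scaler0. Qed.

Lemma mderivpX m p : mderivp 'X_[m] p = p^`M[m].
Proof. by rewrite /mderivp msuppX big_seq1 mcoeffX eqxx scale1r. Qed.

Lemma mderivp1 p : mderivp 1 p = p.
Proof. by rewrite -mpolyX0 mderivpX mderivm0m. Qed.

Lemma mderivpXU i p : mderivp 'X_i p = p^`M(i).
Proof. by rewrite mderivpX mderivmU1m. Qed.

Lemma mderivpC c p : mderivp c%:MP p = c *: p.
Proof. by rewrite -[c%:MP]mulr1 mul_mpolyC mderivpZl mderivp1. Qed.

Lemma mderivpM h1 h2 p : mderivp (h1 * h2) p = mderivp h1 (mderivp h2 p).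
Proof.
have mderivpXM m h : mderivp ('X_[m] * h) p = (mderivp h p)^`M[m].
  elim/mpolyind: h => [|c m' q _ _ IH]; first by rewrite mulr0 !mderivp0l raddf0.
  rewrite mulrDr mderivpDl IH -scalerAr mderivpZl -mpolyXD !mderivpX.
  by rewrite mderivpDl mderivpZl mderivpX mderivmD mderivmZ addmC mderivmDm.
elim/mpolyind: h1 => [|c m q _ _ IH]; first by rewrite mul0r !mderivp0l.
by rewrite mulrDl mderivpDl IH -scalerAl mderivpZl mderivpXM mderivpDl mderivpZl mderivpX.
Qed.

Lemma meval0_mcoeff p : p.@[fun _ => 0] = p@_0.
Proof.
move: p; apply: (@mpoly_linear_eq R^o (fun p => p.@[fun _ => 0]) (fun p => p@_0)).
- by move=> c p q; rewrite mevalD mevalZ.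
- by move=> c p q; rewrite mcoeffD mcoeffZ.
move=> m; rewrite mevalX mcoeffX; have [->|] := eqVneq m 0%MM.
  by rewrite big1 // => i _; rewrite mnm0E expr0.
move=> nz_m; have [i nz_mi] : exists i, m i != 0%N.
  apply/existsP; rewrite -negb_forall; apply: contra nz_m => /forallP eq0.
  by apply/eqP/mnmP => i; rewrite mnm0E; apply/eqP.
by rewrite (bigD1 i) //= expr0n (negbTE nz_mi) mul0r.
Qed.

Definition mnmfact (m : 'X_{1..k}) : nat := \prod_(i < k) (m i)`!.

Lemma meval0_mderivpX m p : (mderivp 'X_[m] p).@[fun _ => 0] = p@_m *+ mnmfact m.
Proof.
rewrite mderivpX meval0_mcoeff mcoeff_mderivm addm0; congr (_ *+ _).
by apply: eq_bigr => i _; rewrite ffactnn.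
Qed.

Lemma meval0_mderivpC h p :
  (mderivp h p).@[fun _ => 0] = (mderivp p h).@[fun _ => 0].
Proof.
move: h; apply: (@mpoly_linear_eq R^o (fun h => (mderivp h p).@[fun _ => 0])
                                     (fun h => (mderivp p h).@[fun _ => 0])).
- by move=> c h1 h2; rewrite mderivpDl mderivpZl mevalD mevalZ.
- by move=> c h1 h2; rewrite mderivpDr mderivpZr mevalD mevalZ.
move=> a; move: p.
apply: (@mpoly_linear_eq R^o (fun p => (mderivp 'X_[a] p).@[fun _ => 0])
                            (fun p => (mderivp p 'X_[a]).@[fun _ => 0])).
- by move=> c p1 p2; rewrite mderivpDr mderivpZr mevalD mevalZ.
- by move=> c p1 p2; rewrite mderivpDl mderivpZl mevalD mevalZ.
move=> b; rewrite !meval0_mderivpX !mcoeffX eq_sym.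
by case: eqP => [->|] //; rewrite !mul0rn.
Qed.

End MPolyDiffOp.

Lemma meval0_mderivpX_eq0 (R : numDomainType) k (p : {mpoly R[k]}) :
  (forall m, (mderivp 'X_[m] p).@[fun _ => 0] = 0) -> p = 0.
Proof.
move=> eq0; apply/mpolyP => m; rewrite mcoeff0; move/eqP: (eq0 m).
rewrite meval0_mderivpX -mulr_natr mulf_eq0 pnatr_eq0 => /orP[/eqP //|].
by rewrite eqn0Ngt prodn_gt0 // => i; rewrite fact_gt0.
Qed.

Section IdealGen.
Variables (R : comNzRingType) (k : nat) (G : 'I_k -> R).
Implicit Types (p h : R).

Definition in_ideal_gen h := exists q : 'I_k -> R, h = \sum_(i < k) q i * G i.

Lemma ideal_gen0 : in_ideal_gen 0.
Proof. by exists (fun _ => 0); rewrite big1 // => i _; rewrite mul0r. Qed.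

Lemma ideal_genD h p : in_ideal_gen h -> in_ideal_gen p -> in_ideal_gen (h + p).
Proof.
case=> q1 -> [q2 ->]; exists (fun i => q1 i + q2 i).
by rewrite -big_split; apply: eq_bigr => i _; rewrite mulrDl.
Qed.

Lemma ideal_genMl p h : in_ideal_gen h -> in_ideal_gen (p * h).
Proof.
case=> q ->; exists (fun i => p * q i).
by rewrite mulr_sumr; apply: eq_bigr => i _; rewrite mulrA.
Qed.

Lemma ideal_genN h : in_ideal_gen h -> in_ideal_gen (- h).
Proof. by rewrite -mulN1r; apply: ideal_genMl. Qed.

Lemma ideal_genB h p : in_ideal_gen h -> in_ideal_gen p -> in_ideal_gen (h - p).
Proof. by move=> ? ?; apply: ideal_genD => //; apply: ideal_genN. Qed.

Lemma ideal_gen_sum (I : Type) (r : seq I) (F : I -> R) :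
  (forall i, in_ideal_gen (F i)) -> in_ideal_gen (\sum_(i <- r) F i).
Proof. by move=> idF; elim/big_rec: _ => [|i x _]; [exact: ideal_gen0 | apply: ideal_genD]. Qed.

Lemma ideal_gen_gen i : in_ideal_gen (G i).
Proof.
exists (fun j => (j == i)%:R); rewrite (bigD1 i) //= eqxx mul1r big1 ?addr0 //.
by move=> j /negbTE ->; rewrite mul0r.
Qed.

End IdealGen.

Lemma ideal_gen_rmorph (R S : comNzRingType) (f : {rmorphism R -> S}) k
    (G : 'I_k -> R) (G' : 'I_k -> S) h :
  (forall i, f (G i) = G' i) -> in_ideal_gen G h -> in_ideal_gen G' (f h).
Proof.
move=> fG [q ->]; exists (fun i => f (q i)).
by rewrite rmorph_sum; apply: eq_bigr => i _; rewrite rmorphM fG.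
Qed.

Section Vandermonde.
Variables (R : comNzRingType) (n : nat).
Implicit Types (p h g : {mpoly R[n]}).

Definition vdm : {mpoly R[n]} := \prod_(i < n) \prod_(j < n | (i < j)%N) ('X_i - 'X_j).

Definition in_mesym_ideal h := in_ideal_gen (fun i : 'I_n => mesym n R i.+1) h.

Lemma mesym_ideal_mesym k : (0 < k <= n)%N -> in_mesym_ideal (mesym n R k).
Proof.
case/andP=> k_gt0 le_kn; have lt_kn : (k.-1 < n)%N by lia.
by have := ideal_gen_gen (fun i : 'I_n => mesym n R i.+1) (Ordinal lt_kn); rewrite prednK.
Qed.

Lemma msymXU (s : 'S_n) i : msym s ('X_i : {mpoly R[n]}) = 'X_(s i).
Proof. by rewrite /msym mmapX mmap1U. Qed.

Lemma msym_mpolyC (s : 'S_n) c : msym s (c%:MP : {mpoly R[n]}) = c%:MP.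
Proof. by rewrite -[c%:MP]mulr1 mul_mpolyC msymZ msym1. Qed.

Lemma msym_mderiv (s : 'S_n) i p : msym s (p^`M(i)) = (msym s p)^`M(s i).
Proof.
apply/mpolyP => m; rewrite mcoeff_sym !mcoeff_mderiv mcoeff_sym mnmE.
congr (_@__ *+ _); apply/mnmP => l; rewrite !mnmE; congr (_ + _)%N.
by case: eqP => [->|ne]; [rewrite eqxx | case: eqP => // /perm_inj].
Qed.

Lemma msym_mderivp (s : 'S_n) h p : msym s (mderivp h p) = mderivp (msym s h) (msym s p).
Proof.
elim/mpoly_ring_ind: h p => [c|i|h1 h2 IH1 IH2|h1 h2 IH1 IH2] p.
- by rewrite !mderivpC msymZ msym_mpolyC mderivpC.
- by rewrite msymXU !mderivpXU msym_mderiv.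
- by rewrite mderivpDl !msymD IH1 IH2 mderivpDl.
- by rewrite mderivpM IH1 IH2 msymM mderivpM.
Qed.

Lemma vdm_det : vdm = (\prod_(i < n) \prod_(j < n | (i < j)%N) (-1)) *
   \det (Vandermonde n (\row_j ('X_j : {mpoly R[n]}))).
Proof.
rewrite det_Vandermonde /vdm -big_split /=; apply: eq_bigr => i _.
rewrite -big_split /=; apply: eq_bigr => j _.
by rewrite !mxE mulN1r opprB.
Qed.

Lemma msym_vdm (s : 'S_n) : msym s vdm = (-1) ^+ s * vdm.
Proof.
have sV : msym s (\det (Vandermonde n (\row_j ('X_j : {mpoly R[n]})))) =
    (-1) ^+ s * \det (Vandermonde n (\row_j ('X_j : {mpoly R[n]}))).
  rewrite -det_map_mx.
  have -> : map_mx (msym s) (Vandermonde n (\row_j ('X_j : {mpoly R[n]}))) =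
      col_perm s (Vandermonde n (\row_j ('X_j : {mpoly R[n]}))).
    by apply/matrixP => i j; rewrite !mxE rmorphXn /= ?mxE msymXU ?mxE.
  by rewrite col_permE det_mulmx det_perm odd_permV mulrC.
rewrite vdm_det msymM sV rmorph_prod /=.
under eq_bigr do rewrite rmorph_prod /=; under eq_bigr do under eq_bigr do rewrite rmorphN1.
by rewrite mulrCA.
Qed.

Lemma vdm_homog : vdm \is (\sum_(i < n) i)%N.-homog.
Proof.
have -> : (\sum_(i < n) i = \sum_(i < n) \sum_(j < n | (i < j)%N) 1)%N.
  rewrite (exchange_big_dep predT) //=; apply: eq_bigr => j _.
  rewrite -(@big_ord_widen_cond _ _ _ j n xpredT (fun _ => 1%N)) ?sum1_card ?card_ord //.
  exact: ltnW.
rewrite /vdm; elim/big_rec2: _ => [|i d p _ homp]; first exact: dhomog1.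
apply: dhomogM => //; elim/big_rec2: _ => [|j e q _ homq]; first exact: dhomog1.
apply: dhomogM => //.
by apply: rpredB; rewrite dhomogX; apply/mdeg1P; eexists.
Qed.

Lemma mcoeff_mderivp h p m : (mderivp h p)@_m =
  \sum_(a <- msupp h) h@_a * (p@_(a + m) *+ \prod_(i < n) ((a + m)%MM i)^_(a i)).
Proof.
rewrite /mderivp; elim: (msupp h) => [|a s IH]; first by rewrite !big_nil mcoeff0.
by rewrite !big_cons mcoeffD IH mcoeffZ mcoeff_mderivm.
Qed.

Lemma mcoeff_mderivp_neq0 h p m : (mderivp h p)@_m != 0 ->
  exists2 a, a \in msupp h & p@_(a + m) != 0.
Proof.
rewrite mcoeff_mderivp => nz.
have /hasP[a ha nza] : has (fun a => p@_(a + m) != 0) (msupp h).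
  apply: contraNT nz => /hasPn p0; rewrite big1_seq // => a /andP[_ ha].
  by move/negPn/eqP: (p0 a ha) ->; rewrite mul0rn mulr0.
by exists a.
Qed.

End Vandermonde.

Lemma sum_ord_leq_inj n (f : 'I_n -> nat) : injective f ->
  (\sum_(i < n) i <= \sum_(i < n) f i)%N.
Proof.
elim: n f => [|n IH] f inj_f; first by rewrite !big_ord0.
pose i0 := [arg max_(i > ord0) f i].
have f_max i : (f i <= f i0)%N by rewrite /i0; case: arg_maxnP => //= j _; apply.
have le_n_fi0 : (n <= f i0)%N.
  pose g (i : 'I_n.+1) : 'I_(f i0).+1 := Ordinal (f_max i : (f i < (f i0).+1)%N).
  have : injective g by move=> a b /(congr1 val) /= /inj_f.
  by move/leq_card; rewrite !card_ord ltnS.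
rewrite big_ord_recr /= [X in (_ <= X)%N](bigD1_ord i0) //= addnC.
by apply: leq_add => //; apply: IH => a b /inj_f /lift_inj.
Qed.

(* By antisymmetry every monomial of [e_k(d/dX) vdm] has pairwise distinct
   exponents, hence degree at least [0 + 1 + ... + (n-1)] = deg vdm; but its
   degree is [deg vdm - k]. *)
Lemma mderivp_mesym_vdm (R : numDomainType) n k :
  (0 < k)%N -> mderivp (mesym n R k) (vdm R n) = 0.
Proof.
move=> k_gt0; set A := mderivp _ _.
have antiA a b : a != b -> msym (tperm a b) A = - A.
  move=> nab; rewrite /A msym_mderivp (issymP _ (mesym_sym n R k)) msym_vdm.
  by rewrite odd_tperm nab expr1 mulN1r -scaleN1r mderivpZr scaleN1r.
apply/mpolyP => m; rewrite mcoeff0; apply/eqP; apply: contraT => nz.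
have inj_m : injective (fun i => m i).
  move=> a b /= eqab; apply/eqP; apply: contraT => nab.
  have := congr1 (mcoeff m) (antiA a b nab); rewrite mcoeff_sym mcoeffN.
  have -> : [multinom m (tperm a b i) | i < n] = m.
    by apply/mnmP => l; rewrite mnmE; case: tpermP => [->|->|].
  move=> /eqP; rewrite -subr_eq0 opprK -mulr2n mulrn_eq0 /=.
  by rewrite (negbTE nz).
have [a ha nza] := mcoeff_mderivp_neq0 nz.
move: ha; rewrite mem_msupp_mesym /mechar => /andP[/eqP deg_a _].
have deg_am : mdeg (a + m)%MM = (\sum_(i < n) i)%N.
  apply/eqP; apply: contraNT nza => ne.
  by rewrite (dhomog_nemf_coeff (vdm_homog R n) ne).
have := sum_ord_leq_inj inj_m; rewrite -mdegE -deg_am mdegD deg_a; lia.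
Qed.

Lemma mderivp_vdm_ideal (R : numDomainType) n (h : {mpoly R[n]}) :
  in_mesym_ideal h -> mderivp h (vdm R n) = 0.
Proof.
case=> q ->; elim/big_rec: _ => [|i x _ Hx]; first by rewrite mderivp0l.
by rewrite mderivpDl Hx addr0 mderivpM mderivp_mesym_vdm // mderivp0r.
Qed.

Lemma size_index_enum_ord n : size (index_enum 'I_n) = n.
Proof. by rewrite /index_enum -enumT size_enum_ord. Qed.

Section LastVariable.
Variables (R : comNzRingType) (n : nat).

Local Notation t := ('X_ord_max : {mpoly R[n.+1]}).
Local Notation w := (@mwiden n R).
Local Notation wd := (widen_ord (leqnSn n)).

Lemma ord_maxVwiden (i : 'I_n.+1) : i = ord_max \/ exists j : 'I_n, i = wd j.
Proof.
case: (unliftP ord_max i) => [j ->|->]; last by left.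
by right; exists j; apply: val_inj; rewrite /= /bump leqNgt ltn_ord.
Qed.

Lemma widen_neq_max (j : 'I_n) : (wd j == ord_max) = false.
Proof. by apply/negbTE; rewrite -val_eqE /= neq_ltn ltn_ord. Qed.

Lemma widen_ord_eq (i j : 'I_n) : (wd i == wd j) = (i == j).
Proof. by rewrite -val_eqE /= val_eqE. Qed.

Lemma mwidenXU (i : 'I_n) : w 'X_i = 'X_(wd i).
Proof. by rewrite mwidenX mnmwiden1. Qed.

Lemma muniX m : muni ('X_[m] : {mpoly R[n.+1]}) =
  'X_[[multinom m (wd i) | i < n]] *: 'X^(m ord_max).
Proof. by rewrite muniE msuppX big_seq1 mcoeffX eqxx scale1r. Qed.

Lemma muni_mwiden g : muni (w g) = g%:P.
Proof.
elim/mpolyind: g => [|c m p _ _ IH]; first by rewrite raddf0 /= muni0.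
rewrite mwidenD muniD IH mwidenZ muniZ mwidenX muniX mnmwiden_ordmax expr0.
rewrite polyCD alg_polyC -mul_polyC -polyCM mul_mpolyC; congr ((c *: 'X_[_])%:P + _).
by apply/mnmP => i; rewrite mnmE mnmwiden_widen.
Qed.

Lemma muni_Xmax : muni t = 'X.
Proof.
rewrite muniX mnm1E eqxx expr1.
have -> : [multinom (U_(ord_max) : 'X_{1..n.+1})%MM (wd i) | i < n] = 0%MM.
  by apply/mnmP => i; rewrite mnmE mnm1E mnm0E eq_sym widen_neq_max.
by rewrite mpolyX0 scale1r.
Qed.

Lemma muni_mderiv_widen (i : 'I_n) (p : {mpoly R[n.+1]}) :
  muni (p^`M(wd i)) = map_poly (mderiv i) (muni p).
Proof.
have map_scaleC c (P : {poly {mpoly R[n]}}) :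
    map_poly (mderiv i) (c%:MP *: P) = c%:MP *: map_poly (mderiv i) P.
  apply/polyP => l; rewrite coef_map_id0 ?raddf0 // !coefZ coef_map_id0 ?raddf0 //.
  by rewrite mderiv_mulC.
have map_scaleXn q l : map_poly (mderiv i) (q *: 'X^l) = q^`M(i) *: 'X^l.
  apply/polyP => l'; rewrite coef_map_id0 ?raddf0 // !coefZ coefXn.
  by case: (l' == l); rewrite ?mulr1 ?mulr0 ?raddf0.
elim/mpolyind: p => [|c m p _ _ IH]; first by rewrite !raddf0 ?muni0 ?map_poly0.
rewrite mderivD mderivZ !muniD !muniZ IH raddfD /= map_scaleC; congr (_ *: _ + _).
rewrite mderivX muniZ !muniX map_scaleXn mderivX !mnmE widen_neq_max subn0.
rewrite scalerA mul_mpolyC; congr ((_ *: 'X_[_]) *: _).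
by apply/mnmP => l; rewrite !mnmE widen_ord_eq.
Qed.

Lemma muni_mderiv_max (p : {mpoly R[n.+1]}) : muni (p^`M(ord_max)) = (muni p)^`().
Proof.
elim/mpolyind: p => [|c m p _ _ IH]; first by rewrite !raddf0 ?muni0 ?deriv0.
rewrite mderivD mderivZ !muniD !muniZ IH derivD derivZ; congr (_ *: _ + _).
rewrite mderivX muniZ !muniX derivZ derivXn mnmBE mnm1E eqxx subn1.
rewrite -scalerMnr -scaler_nat -mpolyC_nat scalerA mul_mpolyC [RHS]scalerA mul_mpolyC.
congr ((_ *: 'X_[_]) *: _).
by apply/mnmP => l; rewrite mnmE [in RHS]mnmE mnmBE mnm1E eq_sym widen_neq_max subn0.
Qed.

Lemma muni_mderivp_mwiden (g : {mpoly R[n]}) (p : {mpoly R[n.+1]}) :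
  muni (mderivp (w g) p) = map_poly (mderivp g) (muni p).
Proof.
elim/mpoly_ring_ind: g p => [c|i|a b IHa IHb|a b IHa IHb] p.
- rewrite mwidenC !mderivpC muniZ; apply/polyP => l.
  by rewrite coefZ coef_map_id0 ?mderivp0r // mderivpC mul_mpolyC.
- rewrite mwidenXU !mderivpXU muni_mderiv_widen.
  by apply: eq_map_poly => x; rewrite mderivpXU.
- rewrite mwidenD mderivpDl muniD IHa IHb; apply/polyP => l.
  by rewrite coefD !coef_map_id0 ?mderivp0r // mderivpDl.
- rewrite mwidenM mderivpM IHa IHb; apply/polyP => l.
  by rewrite !coef_map_id0 ?mderivp0r // mderivpM.
Qed.

Lemma muni_mderivp_Xmax j (p : {mpoly R[n.+1]}) : muni (mderivp (t ^+ j) p) = (muni p)^`(j).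
Proof.
elim: j => [|j IH]; first by rewrite expr0 mderivp1 derivn0.
by rewrite exprS mderivpM mderivpXU muni_mderiv_max IH derivnS.
Qed.

Lemma size_muni_mderivp (h p : {mpoly R[n.+1]}) :
  (size (muni (mderivp h p)) <= size (muni p))%N.
Proof.
elim/mpoly_ring_ind: h p => [c|i|a b IHa IHb|a b IHa IHb] p.
- by rewrite mderivpC muniZ size_scale_leq.
- rewrite mderivpXU; case: (ord_maxVwiden i) => [->|[j ->]].
    rewrite muni_mderiv_max /deriv; apply: leq_trans (size_poly _ _) _.
    exact: leq_pred.
  by rewrite muni_mderiv_widen /map_poly; apply: size_poly.
- rewrite mderivpDl muniD; apply: leq_trans (size_polyD _ _) _.
  by rewrite geq_max; apply/andP; split.
- by rewrite mderivpM; apply: leq_trans (IHa _) (IHb _).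
Qed.

Lemma vdm_recr : vdm R n.+1 = w (vdm R n) * \prod_(i < n) ('X_(wd i) - t).
Proof.
rewrite /vdm big_ord_recr /= [X in _ * X]big1 ?mulr1; last first.
  by move=> j; rewrite /= ltnNge -ltnS ltn_ord.
rewrite rmorph_prod -big_split /=; apply: eq_bigr => i _.
rewrite big_mkcond big_ord_recr /= ltn_ord -big_mkcond /= rmorph_prod /=.
by congr (_ * _); apply: eq_bigr => j _; rewrite rmorphB /= !mwidenXU.
Qed.

Lemma muni_vdm : muni (vdm R n.+1) =
  (vdm R n * (-1) ^+ n) *: \prod_(i < n) ('X - ('X_i)%:P).
Proof.
rewrite vdm_recr rmorphM /= muni_mwiden.
have -> : muni (\prod_(i < n) ('X_(wd i) - t)) =
    (-1) ^+ n * \prod_(i < n) ('X - ('X_i)%:P).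
  have -> : (-1) ^+ n = \prod_(i < n) (-1 : {poly {mpoly R[n]}}).
    by rewrite prodr_const card_ord.
  rewrite rmorph_prod /= -big_split /=.
  apply: eq_bigr => i _.
  by rewrite rmorphB /= -mwidenXU muni_mwiden muni_Xmax mulN1r opprB.
by rewrite -mul_polyC polyCM mulrA rmorphXn /= rmorphN1.
Qed.

Lemma coef_muni_vdm : (muni (vdm R n.+1))`_n = vdm R n * (-1) ^+ n.
Proof.
have := lead_coef_prod_XsubC (index_enum 'I_n) xpredT (fun i => ('X_i : {mpoly R[n]})).
by rewrite /lead_coef size_prod_XsubC size_index_enum_ord muni_vdm coefZ => ->; rewrite mulr1.
Qed.

Lemma size_muni_vdm : (size (muni (vdm R n.+1)) <= n.+1)%N.
Proof.
rewrite muni_vdm (leq_trans (size_scale_leq _ _)) //.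
by rewrite size_prod_XsubC size_index_enum_ord.
Qed.

Lemma mwiden_mesym_ideal k :
  (k <= n.+1)%N -> in_mesym_ideal (w (mesym n R k) - (-t) ^+ k).
Proof.
elim: k => [|k IHk] le_kn; first by rewrite mesym0E mwiden1 expr0 subrr; apply: ideal_gen0.
have -> : w (mesym n R k.+1) - (-t) ^+ k.+1 =
          mesym n.+1 R k.+1 - t * (w (mesym n R k) - (-t) ^+ k).
  by rewrite mesymSS exprS; ring.
apply: ideal_genB; first by apply: mesym_ideal_mesym; lia.
by apply: ideal_genMl; apply: IHk; lia.
Qed.

Lemma Xmax_exp_ideal : in_mesym_ideal (t ^+ n.+1).
Proof.
have := mwiden_mesym_ideal (leqnn n.+1); rewrite mesym_geqnE // raddf0 sub0r.
move=> /ideal_genN; rewrite opprK exprNn => /(ideal_genMl ((-1) ^+ n.+1)).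
by rewrite mulrA -exprMn mulrNN mulr1 expr1n mul1r.
Qed.

Lemma mpoly_decomp_max (h : {mpoly R[n.+1]}) : exists h0 h1, h = w h0 + t * h1.
Proof.
elim/mpoly_ring_ind: h => [c|i|a b [a0 [a1 ->]] [b0 [b1 ->]]|a b [a0 [a1 ->]] [b0 [b1 ->]]].
- by exists c%:MP, 0; rewrite mwidenC mulr0 addr0.
- case: (ord_maxVwiden i) => [->|[j ->]].
    by exists 0, 1; rewrite raddf0 add0r mulr1.
  by exists 'X_j, 0; rewrite mwidenXU mulr0 addr0.
- by exists (a0 + b0), (a1 + b1); rewrite raddfD /=; ring.
- exists (a0 * b0), (a1 * w b0 + w a0 * b1 + t * a1 * b1).
  by rewrite rmorphM /=; ring.
Qed.

End LastVariable.

Section VandermondeAnnihilator.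
Variables (R : numDomainType) (n : nat).

Local Notation t := ('X_ord_max : {mpoly R[n.+1]}).
Local Notation w := (@mwiden n R).

(* Expand in [t] and take the coefficient of [T^(n-j)]: the first summand
   gives [d^j/dt^j] of the leading term [vdm R n * (-1)^n T^n] of [vdm R n.+1],
   the second [d^(j+1)/dt^(j+1)] of a polynomial of degree [<= n], i.e. 0. *)
Lemma mderivp_vdm_lowest j h0 h1 : (j <= n)%N ->
  mderivp (t ^+ j * w h0 + t ^+ j.+1 * h1) (vdm R n.+1) = 0 ->
  mderivp h0 (vdm R n) = 0.
Proof.
move=> le_jn; rewrite mderivpDl !mderivpM => /(congr1 (fun P => (muni P)`_(n - j))).
rewrite /= muniD coefD !muni_mderivp_Xmax muni0 muni_mderivp_mwiden coef0.
have := leq_trans (size_muni_mderivp h1 (vdm R n.+1)) (size_muni_vdm R n).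
move: (muni (mderivp h1 _)) => P sizeP.
rewrite !coef_derivn (subnKC le_jn) coef_map_id0 ?mderivp0r // (coef_muni_vdm R n).
rewrite (@nth_default _ 0 P (j.+1 + (n - j))); last by apply: leq_trans sizeP _; lia.
have -> : vdm R n * (-1) ^+ n = ((-1) ^+ n : R) *: vdm R n.
  by rewrite -mul_mpolyC rmorphXn rmorphN1 mulrC.
rewrite mul0rn addr0 mderivpZr -scaler_nat scalerA -mul_mpolyC => /eqP.
rewrite mulf_eq0 mpolyC_eq0 mulf_eq0 signr_eq0 pnatr_eq0 /= => /orP[|/eqP //].
by rewrite eqn0Ngt ffact_gt0 le_jn.
Qed.

(* The part of [t^j * h] of [t]-order exactly [j] is removed modulo the
   ideal: its coefficient [h0] annihilates [vdm R n], so [h0 = sum q_i e_i],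
   and each [mwiden e_i] is congruent to [(-t)^i]. *)
Lemma mesym_ideal_step j : (j <= n)%N ->
  (forall h : {mpoly R[n]}, mderivp h (vdm R n) = 0 -> in_mesym_ideal h) ->
  (forall h, mderivp (t ^+ j.+1 * h) (vdm R n.+1) = 0 -> in_mesym_ideal (t ^+ j.+1 * h)) ->
  forall h, mderivp (t ^+ j * h) (vdm R n.+1) = 0 -> in_mesym_ideal (t ^+ j * h).
Proof.
move=> le_jn IHn IHj h ann_h; have [h0 [h1 eh]] := mpoly_decomp_max h.
have [q eh0] : in_mesym_ideal h0.
  apply/IHn/(@mderivp_vdm_lowest j _ h1 le_jn).
  by rewrite -ann_h eh exprS; congr mderivp; ring.
pose r := \sum_(i < n) w (q i) * (w (mesym n R i.+1) - (-t) ^+ i.+1).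
have r_ideal : in_mesym_ideal (t ^+ j * r).
  apply/ideal_genMl/ideal_gen_sum => i; apply/ideal_genMl/mwiden_mesym_ideal.
  by have := ltn_ord i; lia.
pose h' := h1 - \sum_(i < n) w (q i) * (-t) ^+ i.
have eq_h : t ^+ j * h = t ^+ j.+1 * h' + t ^+ j * r.
  have -> : r = \sum_(i < n) w (q i * mesym n R i.+1) + t * \sum_(i < n) w (q i) * (-t) ^+ i.
    rewrite mulr_sumr -big_split; apply: eq_bigr => i _; rewrite rmorphM /= exprS; ring.
  by rewrite eh eh0 rmorph_sum /h' exprS; ring.
rewrite eq_h; apply: ideal_genD => //; apply: IHj.
rewrite -[_ * h'](addrK (t ^+ j * r)) -eq_h mderivpDl -scaleN1r mderivpZl.
by rewrite ann_h mderivp_vdm_ideal ?scaler0 ?addr0.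
Qed.

End VandermondeAnnihilator.

Theorem mderivp_vdm_eq0 (R : numDomainType) n (h : {mpoly R[n]}) :
  mderivp h (vdm R n) = 0 <-> in_mesym_ideal h.
Proof.
split; last exact: mderivp_vdm_ideal.
elim: n h => [|n IHn] h.
  rewrite [h]nvar0_mpolyC mderivpC /vdm big_ord0 => /eqP.
  by rewrite -mul_mpolyC mulr1 => /eqP ->; apply: ideal_gen0.
have mult_t d j : (j + d = n.+1)%N -> forall h : {mpoly R[n.+1]},
    mderivp ('X_ord_max ^+ j * h) (vdm R n.+1) = 0 -> in_mesym_ideal ('X_ord_max ^+ j * h).
  elim: d j => [|d IHd] j def_j h'.
    by rewrite addn0 in def_j; rewrite def_j mulrC => _; apply/ideal_genMl/Xmax_exp_ideal.
  by apply: mesym_ideal_step => //; [lia | apply: IHd; lia].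
by have := mult_t n.+1 0%N erefl h; rewrite expr0 mul1r; apply.
Qed.

Lemma split_lshift m k (i : 'I_m) : split (lshift k i) = inl i.
Proof. exact: (unsplitK (inl _ i)). Qed.

Lemma split_rshift m k (i : 'I_k) : split (rshift m i) = inr i.
Proof. exact: (unsplitK (inr _ i)). Qed.

Lemma comp_mpolyXU_tnth (R : comNzRingType) k l (lq : k.-tuple {mpoly R[l]}) i :
  'X_i \mPo lq = tnth lq i.
Proof. by rewrite comp_mpolyXU (tnth_nth 0). Qed.

Section Substitution.
Variables (C : numClosedFieldType) (n : nat).

Local Notation PY := {mpoly C[n + n]}.
Local Notation PL := {mpoly C[n + n.-1]}.
Local Notation Pn := {mpoly C[n]}.
Implicit Types (f g : PY) (P Q : PL).

Definition incl_xy_t : n.-tuple PY := [tuple xv C i | i < n].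
Definition incl_xl_t : n.-tuple PL := [tuple xt C i | i < n].
Definition set_y0_t : (n + n).-tuple Pn :=
  [tuple (match split v with inl i => 'X_i | inr _ => 0 end) | v < n + n].
Definition set_lam0_t : (n + n.-1).-tuple Pn :=
  [tuple (match split v with inl i => 'X_i | inr _ => 0 end) | v < n + n.-1].

Local Notation incl_xy := (comp_mpoly incl_xy_t).
Local Notation incl_xl := (comp_mpoly incl_xl_t).
Local Notation set_y0 := (comp_mpoly set_y0_t).
Local Notation set_lam0 := (comp_mpoly set_lam0_t).
Local Notation in_ideal_esym := (in_ideal_gen (fun i : 'I_n => esym_x C n i.+1)).

Lemma subst_phiE (f : PY) : subst_phi f = f \mPo [tuple subst_var C v | v < n + n].
Proof. by []. Qed.

Lemma pairingE (f g : PY) : pairing f g = (mderivp g f).@[fun _ => 0].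
Proof. by []. Qed.

Lemma incl_xyXU i : incl_xy 'X_i = xv C i.
Proof. by rewrite comp_mpolyXU_tnth tnth_mktuple. Qed.

Lemma incl_xlXU i : incl_xl 'X_i = xt C i.
Proof. by rewrite comp_mpolyXU_tnth tnth_mktuple. Qed.

Lemma set_y0_xv i : set_y0 (xv C i) = 'X_i.
Proof. by rewrite comp_mpolyXU_tnth tnth_mktuple split_lshift. Qed.

Lemma set_lam0_xt i : set_lam0 (xt C i) = 'X_i.
Proof. by rewrite comp_mpolyXU_tnth tnth_mktuple split_lshift. Qed.

Lemma set_lam0_lam j : set_lam0 (lam C j) = 0.
Proof. by rewrite comp_mpolyXU_tnth tnth_mktuple split_rshift. Qed.

Lemma set_y0K : cancel incl_xy set_y0.
Proof.
apply: mpoly_morph_eq => [p q|p q|p q|p q|c|i] /=; rewrite ?rmorphD ?rmorphM //.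
  by rewrite !comp_mpolyC.
by rewrite incl_xyXU set_y0_xv.
Qed.

Lemma set_lam0K : cancel incl_xl set_lam0.
Proof.
apply: mpoly_morph_eq => [p q|p q|p q|p q|c|i] /=; rewrite ?rmorphD ?rmorphM //.
  by rewrite !comp_mpolyC.
by rewrite incl_xlXU set_lam0_xt.
Qed.

Lemma set_lam0_subst_phi (f : PY) : set_lam0 (subst_phi f) = set_y0 f.
Proof.
move: f; apply: mpoly_morph_eq => [p q|p q|p q|p q|c|v] /=;
  rewrite ?subst_phiE ?rmorphD ?rmorphM //; first by rewrite !comp_mpolyC.
rewrite !comp_mpolyXU_tnth !tnth_mktuple /subst_var.
case: (split v) => [i|j]; rewrite ?set_lam0_xt //.
by rewrite /phi rmorph_sum big1 // => l _; rewrite rmorphM /= set_lam0_lam mul0r.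
Qed.

Lemma incl_xy_vdm : incl_xy (vdm C n) = Delta C n.
Proof.
rewrite /vdm /Delta rmorph_prod; apply: eq_bigr => i _.
by rewrite rmorph_prod; apply: eq_bigr => j _; rewrite rmorphB /= !incl_xyXU.
Qed.

Lemma incl_xl_mesym k : incl_xl (mesym n C k) = esym_x C n k.
Proof.
rewrite mesymE rmorph_sum /esym_x; apply: eq_bigr => h _.
rewrite /= (comp_mpolyX (mesym1 h)) (big_mkcond (fun i => i \in h)) /=.
apply: eq_bigr => i _.
by rewrite tnth_mktuple mnmE; case: (i \in h); rewrite ?expr1 ?expr0.
Qed.

Lemma set_y0_dx (f : PY) i : set_y0 (dx i f) = (set_y0 f)^`M(i).
Proof.
rewrite mderiv_comp big_split_ord /= [X in _ + X]big1 ?addr0; last first.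
  by move=> j _; rewrite tnth_mktuple split_rshift raddf0 mulr0.
rewrite (bigD1 i) //= big1 ?addr0 => [|j ne_ji].
  by rewrite tnth_mktuple split_lshift mderivXU eqxx mulr1.
by rewrite tnth_mktuple split_lshift mderivXU (negbTE ne_ji) mulr0.
Qed.

Lemma set_y0_mderivp (g : Pn) (f : PY) : set_y0 (mderivp (incl_xy g) f) = mderivp g (set_y0 f).
Proof.
elim/mpoly_ring_ind: g f => [c|i|a b IHa IHb|a b IHa IHb] f.
- by rewrite comp_mpolyC !mderivpC comp_mpolyZ.
- by rewrite incl_xyXU !mderivpXU set_y0_dx.
- by rewrite rmorphD !mderivpDl rmorphD /= IHa IHb.
- by rewrite rmorphM !mderivpM /= IHa IHb.
Qed.

Lemma pairing_incl_xy (f : PY) (g : Pn) :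
  pairing f (incl_xy g) = (mderivp g (set_y0 f)).@[fun _ => 0].
Proof.
rewrite pairingE -set_y0_mderivp comp_mpoly_meval; apply: meval_eq => v.
by rewrite tnth_mktuple; case: (split v) => [i|j]; rewrite ?mevalXU ?meval0.
Qed.

Lemma mderiv_lam_incl_xl (j : 'I_n.-1) (p : Pn) : (incl_xl p)^`M(rshift n j) = 0.
Proof.
rewrite mderiv_comp big1 // => i _.
by rewrite tnth_mktuple /xt mderivXU eq_lrshift mulr0.
Qed.

Lemma mderiv_lam_phi (j : 'I_n.-1) i : (phi (xt C i))^`M(rshift n j) = xt C i ^+ j.+1.
Proof.
have dX l : (lam C l * xt C i ^+ l.+1)^`M(rshift n j) = (l == j)%:R * xt C i ^+ j.+1.
  rewrite mderivM -(incl_xlXU i) -rmorphXn mderiv_lam_incl_xl mulr0 addr0.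
  rewrite /lam mderivXU eq_rshift mpolyC_nat rmorphXn /=.
  by case: eqP => [->|_]; rewrite ?mul0r.
rewrite /phi (big_morph _ (mderivD _) (mderiv0 _ _)) (bigD1 j) //= big1 ?addr0.
  by rewrite dX eqxx mul1r.
by move=> l /negbTE ne_lj; rewrite dX ne_lj mul0r.
Qed.

Definition Eadj k (f : PY) : PY := \sum_(i < n) xv C i ^+ k * f^`M(rshift n i).

Lemma subst_phi_xv (i : 'I_n) : subst_phi (xv C i) = xt C i.
Proof. by rewrite subst_phiE comp_mpolyXU_tnth tnth_mktuple /subst_var split_lshift. Qed.

Lemma mderiv_lam_subst_phi (j : 'I_n.-1) (f : PY) :
  (subst_phi f)^`M(rshift n j) = subst_phi (Eadj j.+1 f).
Proof.
rewrite subst_phiE mderiv_comp big_split_ord /= big1 ?add0r; last first.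
  by move=> i _; rewrite tnth_mktuple /subst_var split_lshift /xt mderivXU eq_lrshift mulr0.
rewrite /Eadj subst_phiE rmorph_sum; apply: eq_bigr => i _.
rewrite tnth_mktuple /subst_var split_rshift mderiv_lam_phi rmorphM rmorphXn /=.
by rewrite -!subst_phiE subst_phi_xv mulrC.
Qed.

Lemma esym_ideal_mderiv_lam (j : 'I_n.-1) P :
  in_ideal_esym P -> in_ideal_esym (P^`M(rshift n j)).
Proof.
case=> q ->; exists (fun i => (q i)^`M(rshift n j)).
rewrite (big_morph _ (mderivD _) (mderiv0 _ _)); apply: eq_bigr => i _.
by rewrite mderivM -incl_xl_mesym mderiv_lam_incl_xl mulr0 addr0.
Qed.

Lemma esym_ideal_incl_xl (p : Pn) : in_mesym_ideal p -> in_ideal_esym (incl_xl p).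
Proof.
by move=> ideal_p; apply: ideal_gen_rmorph ideal_p => i; exact: incl_xl_mesym.
Qed.

Lemma mesym_ideal_set_lam0 (P : PL) : in_ideal_esym P -> in_mesym_ideal (set_lam0 P).
Proof.
by move=> ideal_P; apply: ideal_gen_rmorph ideal_P => i; rewrite /= -incl_xl_mesym set_lam0K.
Qed.

Definition lamdeg (m : 'X_{1..n + n.-1}) : nat := (\sum_(j < n.-1) m (rshift n j))%N.

Definition euler_lam (P : PL) : PL := \sum_(j < n.-1) lam C j * P^`M(rshift n j).

(* Inverse of [euler_lam] on monomials of positive [lambda]-degree; those of
   degree 0 are sent to 0 (division by [0%:R] gives [0]). *)
Definition inv_euler_lam (P : PL) : PL :=
  \sum_(m <- msupp P) (P@_m / (lamdeg m)%:R) *: 'X_[m].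

Lemma inv_euler_lamE P (K : nat) : (msize P <= K)%N ->
  inv_euler_lam P = \sum_(m : 'X_{1..(n + n.-1) < K}) (P@_m / (lamdeg m)%:R) *: 'X_[m].
Proof.
move=> le_PK; rewrite /inv_euler_lam.
rewrite (big_msupp_bound (F := fun m c => (c / (lamdeg m)%:R) *: 'X_[m]) le_PK) //.
by move=> m; rewrite mul0r scale0r.
Qed.

Lemma inv_euler_lam_is_linear c P Q :
  inv_euler_lam (c *: P + Q) = c *: inv_euler_lam P + inv_euler_lam Q.
Proof.
pose K := (msize P + msize Q + msize (c *: P + Q)).+1.
rewrite !(@inv_euler_lamE _ K) ?scaler_sumr -?big_split /=; try by rewrite /K; lia.
by apply: eq_bigr => m _; rewrite mcoeffD mcoeffZ mulrDl scalerDl scalerA mulrA.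
Qed.

Lemma inv_euler_lam0 : inv_euler_lam 0 = 0.
Proof. by rewrite /inv_euler_lam msupp0 big_nil. Qed.

Lemma inv_euler_lamD P Q : inv_euler_lam (P + Q) = inv_euler_lam P + inv_euler_lam Q.
Proof. by have := inv_euler_lam_is_linear 1 P Q; rewrite !scale1r. Qed.

Lemma inv_euler_lamX m : inv_euler_lam 'X_[m] = (lamdeg m)%:R^-1 *: 'X_[m].
Proof. by rewrite /inv_euler_lam msuppX big_seq1 mcoeffX eqxx mul1r. Qed.

Definition mnm_incl_xl (a : 'X_{1..n}) : 'X_{1..n + n.-1} :=
  [multinom (match split v with inl i => a i | inr _ => 0%N end) | v < n + n.-1].

Lemma incl_xlX a : incl_xl 'X_[a] = 'X_[mnm_incl_xl a].
Proof.
rewrite comp_mpolyX [RHS]mpolyXE_id big_split_ord /= [X in _ = _ * X]big1 ?mulr1.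
  by apply: eq_bigr => i _; rewrite tnth_mktuple mnmE split_lshift.
by move=> j _; rewrite mnmE split_rshift expr0.
Qed.

Lemma lamdeg_incl_xl a : lamdeg (mnm_incl_xl a) = 0%N.
Proof. by rewrite /lamdeg big1 // => j _; rewrite mnmE split_rshift. Qed.

Lemma lamdegD m1 m2 : lamdeg (m1 + m2)%MM = (lamdeg m1 + lamdeg m2)%N.
Proof. by rewrite /lamdeg -big_split /=; apply: eq_bigr => j _; rewrite mnmDE. Qed.

Lemma inv_euler_lam_mul_incl_xl (Q : PL) (g : Pn) :
  inv_euler_lam (Q * incl_xl g) = inv_euler_lam Q * incl_xl g.
Proof.
move: Q; apply: (@mpoly_linear_eq _ _ _ (fun Q => inv_euler_lam (Q * incl_xl g))
                                       (fun Q => inv_euler_lam Q * incl_xl g)).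
- by move=> c P Q; rewrite mulrDl -scalerAl inv_euler_lam_is_linear.
- by move=> c P Q; rewrite inv_euler_lam_is_linear mulrDl scalerAl.
move=> m; move: g.
apply: (@mpoly_linear_eq _ _ _ (fun g : Pn => inv_euler_lam ('X_[m] * incl_xl g))
                              (fun g : Pn => inv_euler_lam 'X_[m] * incl_xl g)).
- by move=> c p q; rewrite rmorphD /= comp_mpolyZ mulrDr -scalerAr inv_euler_lam_is_linear.
- by move=> c p q; rewrite rmorphD /= comp_mpolyZ mulrDr scalerAr.
move=> a; rewrite incl_xlX -mpolyXD !inv_euler_lamX -scalerAl -mpolyXD.
by rewrite lamdegD lamdeg_incl_xl addn0.
Qed.

Lemma euler_lamX m : euler_lam 'X_[m] = (lamdeg m)%:R *: 'X_[m].
Proof.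
rewrite /euler_lam /lamdeg natr_sum scaler_suml; apply: eq_bigr => j _.
rewrite mderivX -scalerAr /lam.
case: (posnP (m (rshift n j))) => [->|pos]; first by rewrite !scale0r.
congr (_ *: _); rewrite -mpolyXD; congr 'X_[_].
apply/mnmP => l; rewrite mnmDE mnmBE mnm1E.
by case: eqP => [<-|_]; [rewrite add1n subn1 prednK | rewrite subn0].
Qed.

Lemma incl_xl_set_lam0X m :
  incl_xl (set_lam0 'X_[m]) = if lamdeg m == 0%N then 'X_[m] else 0.
Proof.
rewrite comp_mpolyX big_split_ord /=.
have [/eqP|] := eqVneq (lamdeg m) 0%N.
  rewrite sum_nat_eq0 => /forallP m_lam0.
  rewrite [X in _ * X]big1 ?mulr1; last by move=> j _; rewrite (eqP (m_lam0 j)) expr0.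
  rewrite rmorph_prod [RHS]mpolyXE_id big_split_ord /= [X in _ = _ * X]big1 ?mulr1.
    by apply: eq_bigr => i _; rewrite tnth_mktuple split_lshift rmorphXn /= incl_xlXU.
  by move=> j _; rewrite (eqP (m_lam0 j)) expr0.
rewrite sum_nat_eq0 negb_forall => /existsP [j]; rewrite implyTb => m_j.
rewrite [X in _ * X](bigD1 j) //= tnth_mktuple split_rshift expr0n (negbTE m_j).
by rewrite mul0r mulr0 raddf0.
Qed.

Lemma euler_lam_decomp (P : PL) : P = incl_xl (set_lam0 P) + inv_euler_lam (euler_lam P).
Proof.
move: P; apply: (@mpoly_linear_eq _ _ _ id (fun P => incl_xl (set_lam0 P) + inv_euler_lam (euler_lam P))).
- by [].
- move=> c p q; rewrite !rmorphD /= !comp_mpolyZ /euler_lam.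
  have -> : \sum_(j < n.-1) lam C j * (c *: p + q)^`M(rshift n j) =
     c *: \sum_(j < n.-1) lam C j * p^`M(rshift n j) + \sum_(j < n.-1) lam C j * q^`M(rshift n j).
    rewrite scaler_sumr -big_split /=; apply: eq_bigr => j _.
    by rewrite mderivD mderivZ mulrDr scalerAr.
  rewrite inv_euler_lam_is_linear scalerDr; ring.
move=> m; rewrite incl_xl_set_lam0X euler_lamX.
rewrite -[_ *: 'X_[m]]addr0 inv_euler_lam_is_linear inv_euler_lam0 addr0 inv_euler_lamX scalerA /=.
case: eqP => [->|/eqP nz_m]; first by rewrite mul0r scale0r addr0.
by rewrite divff ?scale1r ?add0r // pnatr_eq0.
Qed.

(* A polynomial lies in the ideal as soon as its [lambda]-free part and all
   its [lambda]-derivatives do, because [euler_lam] is in the ideal generated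
   by the [lambda]-derivatives and [inv_euler_lam] is [C[x]]-linear. *)
Lemma esym_ideal_lam (P : PL) : in_mesym_ideal (set_lam0 P) ->
  (forall j : 'I_n.-1, in_ideal_esym (P^`M(rshift n j))) -> in_ideal_esym P.
Proof.
move=> ideal_P0 ideal_dP; rewrite [P]euler_lam_decomp.
apply: ideal_genD; first exact: esym_ideal_incl_xl.
have [q ->] : in_ideal_esym (euler_lam P).
  by apply: ideal_gen_sum => j; apply: ideal_genMl.
rewrite (big_morph _ inv_euler_lamD inv_euler_lam0); apply: ideal_gen_sum => i.
rewrite -incl_xl_mesym inv_euler_lam_mul_incl_xl; apply/ideal_genMl/esym_ideal_incl_xl.
exact: ideal_gen_gen.
Qed.

Lemma pairingDr f g1 g2 : pairing f (g1 + g2) = pairing f g1 + pairing f g2.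
Proof. by rewrite !pairingE mderivpDl mevalD. Qed.

Lemma pairingZr f c g : pairing f (c *: g) = c * pairing f g.
Proof. by rewrite !pairingE mderivpZl mevalZ. Qed.

Lemma pairing0r f : pairing f 0 = 0.
Proof. by rewrite pairingE mderivp0l meval0. Qed.

Lemma pairingDl f1 f2 g : pairing (f1 + f2) g = pairing f1 g + pairing f2 g.
Proof. by rewrite !pairingE mderivpDr mevalD. Qed.

Lemma pairingZl c f g : pairing (c *: f) g = c * pairing f g.
Proof. by rewrite !pairingE mderivpZr mevalZ. Qed.

Lemma pairing0l g : pairing 0 g = 0.
Proof. by rewrite pairingE mderivp0r meval0. Qed.

Lemma pairingXr v f g : pairing f ('X_v * g) = pairing (f^`M(v)) g.
Proof. by rewrite !pairingE mulrC mderivpM mderivpXU. Qed.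

Lemma pairing_mderivr v f g : pairing f (g^`M(v)) = pairing ('X_v * f) g.
Proof. by rewrite !pairingE meval0_mderivpC -mderivpXU -mderivpM meval0_mderivpC mulrC. Qed.

Lemma pairing_iter_dx i k f g :
  pairing f (iter k (dx i) g) = pairing (xv C i ^+ k * f) g.
Proof.
elim: k f => [|k IHk] f; first by rewrite expr0 mul1r.
by rewrite iterS pairing_mderivr IHk exprSr -mulrA.
Qed.

Lemma pairing_Eop k f g : pairing f (Eop k g) = pairing (Eadj k f) g.
Proof.
rewrite /Eop /Eadj (big_morph _ (pairingDr f) (pairing0r f)).
rewrite (big_morph (fun f => pairing f g) (fun f1 f2 => pairingDl f1 f2 g) (pairing0l g)).
by apply: eq_bigr => i _; rewrite pairingXr pairing_iter_dx.
Qed.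

(* Generated by the adjoints of the generators of [in_OPalg]; [OPadj_ext] is
   needed to close it under multiplication by arbitrary polynomials in [x]. *)
Inductive in_OPadj : (PY -> PY) -> Prop :=
  | OPadj_scal (c : C) : in_OPadj (fun p => c *: p)
  | OPadj_x (i : 'I_n) : in_OPadj (fun p => xv C i * p)
  | OPadj_E (k : nat) : (1 <= k)%N -> (k <= n.-1)%N -> in_OPadj (Eadj k)
  | OPadj_add D1 D2 : in_OPadj D1 -> in_OPadj D2 -> in_OPadj (fun p => D1 p + D2 p)
  | OPadj_comp D1 D2 : in_OPadj D1 -> in_OPadj D2 -> in_OPadj (fun p => D1 (D2 p))
  | OPadj_ext D1 D2 : D1 =1 D2 -> in_OPadj D1 -> in_OPadj D2.

Lemma OPalg_adjoint D : in_OPalg D ->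
  exists2 D', in_OPadj D' & forall f g, pairing f (D g) = pairing (D' f) g.
Proof.
elim=> [c|i|k k_gt0 le_kn|D1 D2 _ [E1 adjE1 e1] _ [E2 adjE2 e2]
       |D1 D2 _ [E1 adjE1 e1] _ [E2 adjE2 e2]].
- by exists (fun p => c *: p) => [|f g]; [constructor | rewrite pairingZr pairingZl].
- by exists (fun p => xv C i * p) => [|f g]; [constructor | rewrite pairing_mderivr].
- by exists (Eadj k) => [|f g]; [constructor | rewrite pairing_Eop].
- by exists (fun p => E1 p + E2 p) => [|f g]; [constructor | rewrite pairingDr pairingDl e1 e2].
- by exists (fun p => E2 (E1 p)) => [|f g]; [constructor | rewrite e1 e2].
Qed.

Lemma OPadj_adjoint D' : in_OPadj D' ->
  exists2 D, in_OPalg D & forall f g, pairing (D' f) g = pairing f (D g).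
Proof.
elim=> [c|i|k k_gt0 le_kn|D1 D2 _ [E1 opE1 e1] _ [E2 opE2 e2]
       |D1 D2 _ [E1 opE1 e1] _ [E2 opE2 e2]|D1 D2 eqD _ [E opE e]].
- by exists (fun p => c *: p) => [|f g]; [constructor | rewrite pairingZr pairingZl].
- by exists (dx i) => [|f g]; [constructor | rewrite pairing_mderivr].
- by exists (@Eop C n k) => [|f g]; [constructor | rewrite pairing_Eop].
- by exists (fun p => E1 p + E2 p) => [|f g]; [constructor | rewrite pairingDr pairingDl e1 e2].
- by exists (fun p => E2 (E1 p)) => [|f g]; [constructor | rewrite e1 e2].
- by exists E => // f g; rewrite -eqD.
Qed.

Lemma esym_ideal_OPadj D f : in_OPadj D ->
  in_ideal_esym (subst_phi f) -> in_ideal_esym (subst_phi (D f)).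
Proof.
move=> adjD; elim: adjD f => [c|i|k k_gt0 le_kn|D1 D2 _ IH1 _ IH2|D1 D2 _ IH1 _ IH2
                              |D1 D2 eqD _ IH] f ideal_f.
- by rewrite subst_phiE comp_mpolyZ -mul_mpolyC; apply: ideal_genMl.
- by rewrite subst_phiE rmorphM /= -!subst_phiE subst_phi_xv; apply: ideal_genMl.
- have lt_kn : (k.-1 < n.-1)%N by lia.
  have -> : k = (Ordinal lt_kn).+1 by rewrite /= prednK.
  by rewrite -mderiv_lam_subst_phi; apply: esym_ideal_mderiv_lam.
- by rewrite subst_phiE rmorphD /= -!subst_phiE; apply: ideal_genD; [apply: IH1 | apply: IH2].
- by apply/IH1/IH2.
- by rewrite -eqD; apply: IH.
Qed.

Lemma pairing_Delta_eq0 f : in_ideal_esym (subst_phi f) -> pairing f (Delta C n) = 0.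
Proof.
move=> ideal_f; rewrite -incl_xy_vdm pairing_incl_xy meval0_mderivpC.
have /mderivp_vdm_eq0 -> : in_mesym_ideal (set_y0 f).
  by rewrite -set_lam0_subst_phi; apply: mesym_ideal_set_lam0.
by rewrite meval0.
Qed.

Definition OPadj_perp (f : PY) := forall D, in_OPadj D -> pairing (D f) (Delta C n) = 0.

Lemma OPadj_mul_incl_xy (q : Pn) : in_OPadj (fun p => incl_xy q * p).
Proof.
elim/mpoly_ring_ind: q => [c|i|a b IHa IHb|a b IHa IHb].
- by apply: (OPadj_ext _ (OPadj_scal c)) => p; rewrite comp_mpolyC mul_mpolyC.
- by apply: (OPadj_ext _ (OPadj_x i)) => p; rewrite incl_xyXU.
- by apply: (OPadj_ext _ (OPadj_add IHa IHb)) => p; rewrite rmorphD mulrDl.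
- by apply: (OPadj_ext _ (OPadj_comp IHa IHb)) => p; rewrite rmorphM mulrA.
Qed.

(* Pairing with [x^m Delta] for every [m] detects [set_y0 f (d/dx) Delta]. *)
Lemma OPadj_perp_set_y0 f : OPadj_perp f -> in_mesym_ideal (set_y0 f).
Proof.
move=> perp_f; apply/mderivp_vdm_eq0/meval0_mderivpX_eq0 => m.
rewrite -mderivpM meval0_mderivpC -(set_y0K 'X_[m]) -rmorphM /= -pairing_incl_xy.
by rewrite incl_xy_vdm; apply: perp_f (OPadj_mul_incl_xy 'X_[m]).
Qed.

(* Induction on the size of [subst_phi f]: its [lambda]-derivatives are the
   [subst_phi (Eadj k f)], and [Eadj k f] is again [OPadj]-orthogonal. *)
Lemma OPadj_perp_esym_ideal f : OPadj_perp f -> in_ideal_esym (subst_phi f).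
Proof.
elim: (msize (subst_phi f)) {-2}f (leqnn (msize (subst_phi f))) => [|K IHK] {}f le_fK perp_f.
  by move: le_fK; rewrite leqn0 msize_poly_eq0 => /eqP ->; apply: ideal_gen0.
apply: esym_ideal_lam => [|j].
  by rewrite set_lam0_subst_phi; apply: OPadj_perp_set_y0.
rewrite mderiv_lam_subst_phi; apply: IHK.
  by rewrite -mderiv_lam_subst_phi (leq_trans (msize_mderiv _ _)) // -subn1 leq_subLR add1n.
move=> D adjD; apply: (perp_f (fun p => D (Eadj j.+1 p))).
by apply: OPadj_comp => //; constructor => //; have := ltn_ord j; lia.
Qed.

End Substitution.

Theorem proposition4p4 (C : numClosedFieldType) (n : nat) (f : PXY C n) :
  in_OP_perp f <-> in_esym_ideal (subst_phi f).
Proof.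
split=> [perp_f | ideal_f g [D [OP_D ->]]].
- apply: OPadj_perp_esym_ideal => D /OPadj_adjoint [D' OP_D' adjD].
  by rewrite adjD; apply: perp_f; exists D'.
- have [D' adj_D' adjD] := OPalg_adjoint OP_D.
  by rewrite adjD; apply/pairing_Delta_eq0/esym_ideal_OPadj.
Qed.
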